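(* Let $0<\alpha\le 2\pi/3$. Then for all $u,v\in V$: $u$ and $v$ are connected in $G^-_\alpha$ if and only if they are connected in $G_R$.
   Context: Let $V$ be a finite set of pairwise distinct points (nodes) in the Euclidean plane, $d$ the Euclidean distance, and $R>0$. Let $G_R=(V,E)$ be the undirected graph with $E=\{\{u,v\}: u\neq v,\ d(u,v)\le R\}$. Fix a finite increasing sequence of radius levels $0<r_1<r_2<\dots<r_k=R$. For $u\in V$ and $1\le i\le k$ let $S_i(u)=\{v\in V\setminus\{u\}: d(u,v)\le r_i\}$. For $0<\alpha<2\pi$, a closed cone of width $\alpha$ with apex $u$ is a set $\{u+t(\cos\varphi,\sin\varphi): t\ge 0,\ \varphi\in[\theta-\alpha/2,\theta+\alpha/2]\}$ for some $\theta$. A finite set $S\subseteq V\setminus\{u\}$ has an $\alpha$-gap (at $u$) if some closed cone of width $\alpha$ with apex $u$ contains no node of $S$ (in particular $\emptyset$ has an $\alpha$-gap). The algorithm CBTC($\alpha$) assigns to each $u$ the index $i_u$ = the least $i\in\{1,\dots,k\}$ such that $S_i(u)$ has no $\alpha$-gap, or $i_u=k$ if there is no such $i$; set $N_\alpha(u)=S_{i_u}(u)$ and $N_\alpha=\{(u,v): v\in N_\alpha(u)\}$ (a directed relation, not necessarily symmetric). Let $E^-_\alpha=\{\{u,v\}: (u,v)\in N_\alpha\text{ and }(v,u)\in N_\alpha\}$ and $G^-_\alpha=(V,E^-_\alpha)$. *)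

From Stdlib Require Import Reals List Relations.
Open Scope R_scope.

Definition point : Type := (R * R)%type.

Definition dist (p q : point) : R :=
  sqrt ((fst p - fst q) ^ 2 + (snd p - snd q) ^ 2).

Definition radius_levels (k : nat) (r : nat -> R) (Rad : R) : Prop :=
  (1 <= k)%nat /\ 0 < r 1%nat /\
  (forall i, (1 <= i)%nat -> (i < k)%nat -> r i < r (S i)) /\
  r k = Rad.

Definition Sset (V : list point) (r : nat -> R) (i : nat) (u v : point) : Prop :=
  In v V /\ v <> u /\ dist u v <= r i.

Definition in_cone (u : point) (alpha theta : R) (p : point) : Prop :=
  exists t phi, 0 <= t /\ theta - alpha / 2 <= phi <= theta + alpha / 2 /\
    p = (fst u + t * cos phi, snd u + t * sin phi).

Definition has_gap (u : point) (alpha : R) (S : point -> Prop) : Prop :=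
  exists theta, forall v, S v -> ~ in_cone u alpha theta v.

(* i is the index i_u chosen by CBTC(alpha) at u *)
Definition is_iu (V : list point) (k : nat) (r : nat -> R) (alpha : R)
    (u : point) (i : nat) : Prop :=
  (1 <= i <= k)%nat /\
  ((~ has_gap u alpha (Sset V r i u) /\
      forall j, (1 <= j)%nat -> (j < i)%nat -> has_gap u alpha (Sset V r j u))
   \/
   (i = k /\ forall j, (1 <= j <= k)%nat -> has_gap u alpha (Sset V r j u))).

Definition Nalpha (V : list point) (k : nat) (r : nat -> R) (alpha : R)
    (u v : point) : Prop :=
  exists i, is_iu V k r alpha u i /\ Sset V r i u v.

Definition Eminus (V : list point) (k : nat) (r : nat -> R) (alpha : R)
    (u v : point) : Prop :=
  In u V /\ In v V /\ Nalpha V k r alpha u v /\ Nalpha V k r alpha v u.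

Definition ER (V : list point) (Rad : R) (u v : point) : Prop :=
  In u V /\ In v V /\ u <> v /\ dist u v <= Rad.

Definition connected (E : point -> point -> Prop) (u v : point) : Prop :=
  clos_refl_trans point E u v.

(* If u, v are adjacent in G_R but not in G^-_alpha, say v is not in N_alpha(u), then
   d(u,v) > r_{i_u}, so S_{i_u}(u) has no alpha-gap and the cone of width alpha around
   the direction of v contains some w in N_alpha(u).  Since alpha/2 <= pi/3 and
   d(u,w) < d(u,v), the law of cosines gives d(w,v) < d(u,v): the edge uv of G_R is
   replaced by the two strictly shorter edges uw and wv.  Induction on the length of
   an edge among the finitely many pairwise distances concludes. *)

From Pilot Require Import Defs.
From Stdlib Require Import Reals List Relations Lra Lia Psatz Wf_nat Classical.
Open Scope R_scope.
Local Notation dist := Defs.dist.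

Lemma clos_rt_incl {A : Type} (E F : relation A) :
  inclusion A E F -> inclusion A (clos_refl_trans A E) (clos_refl_trans A F).
Proof.
  intros HEF x y Hxy.
  induction Hxy as [x y Exy | x | x y z _ IHxy _ IHyz].
  - apply rt_step, HEF, Exy.
  - apply rt_refl.
  - apply rt_trans with y; assumption.
Qed.

Lemma filter_length_incl {A : Type} (f g : A -> bool) (l : list A) :
  (forall x, f x = true -> g x = true) ->
  (length (filter f l) <= length (filter g l))%nat.
Proof.
  intros Hfg. induction l as [|a l IH]; simpl; [lia|].
  destruct (f a) eqn:Fa; [rewrite (Hfg a Fa); simpl; lia|].
  destruct (g a); simpl; lia.
Qed.

Lemma filter_length_incl_lt {A : Type} (f g : A -> bool) (l : list A) (z : A) :
  (forall x, f x = true -> g x = true) ->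
  In z l -> f z = false -> g z = true ->
  (length (filter f l) < length (filter g l))%nat.
Proof.
  intros Hfg. induction l as [|a l IH]; simpl; [tauto|].
  intros [<- | Hz] Fz Gz.
  - rewrite Fz, Gz; simpl. pose proof (filter_length_incl f g l Hfg). lia.
  - specialize (IH Hz Fz Gz).
    destruct (f a) eqn:Fa; [rewrite (Hfg a Fa); simpl; lia|].
    destruct (g a); simpl; lia.
Qed.

Lemma cos_ge_half x : - (PI / 3) <= x <= PI / 3 -> 1 / 2 <= cos x.
Proof.
  pose proof PI_RGT_0.
  assert (Hpos : forall y, 0 <= y <= PI / 3 -> 1 / 2 <= cos y).
  { intros y Hy. rewrite <- cos_PI3.
    destruct (Req_dec y (PI / 3)) as [->|Ne]; [lra|].
    left; apply cos_decreasing_1; lra. }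
  intros Hx. destruct (Rle_dec 0 x).
  - apply Hpos; lra.
  - rewrite <- cos_neg; apply Hpos; lra.
Qed.

Lemma unit_circle_angle a b : a * a + b * b = 1 -> exists th, cos th = a /\ sin th = b.
Proof.
  intros Hab.
  assert (Ha : -1 <= a <= 1) by nra.
  assert (Hsin : sqrt (1 - a²) = Rabs b).
  { replace (1 - a²) with b² by (unfold Rsqr; lra). apply sqrt_Rsqr_abs. }
  destruct (Rle_dec 0 b).
  - exists (acos a). rewrite cos_acos, sin_acos, Hsin by exact Ha.
    split; [reflexivity | apply Rabs_right; lra].
  - exists (- acos a). rewrite cos_neg, sin_neg, cos_acos, sin_acos, Hsin by exact Ha.
    split; [reflexivity | rewrite Rabs_left; lra].
Qed.

Lemma dist_sym p q : dist p q = dist q p.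
Proof. unfold dist; f_equal; ring. Qed.

Lemma dist_nonneg p q : 0 <= dist p q.
Proof. apply sqrt_pos. Qed.

Lemma dist_sqr p q : dist p q * dist p q = (fst p - fst q) ^ 2 + (snd p - snd q) ^ 2.
Proof. apply sqrt_sqrt. pose proof (pow2_ge_0 (fst p - fst q)). pose proof (pow2_ge_0 (snd p - snd q)). lra. Qed.

Lemma dist_pos p q : p <> q -> 0 < dist p q.
Proof.
  intros Hpq. destruct (Rle_lt_or_eq_dec _ _ (dist_nonneg p q)) as [Hlt|Heq]; [exact Hlt|].
  exfalso; apply Hpq. pose proof (dist_sqr p q) as Hsq. rewrite <- Heq in Hsq.
  destruct p as [p1 p2], q as [q1 q2]; simpl in Hsq.
  pose proof (pow2_ge_0 (p1 - q1)). pose proof (pow2_ge_0 (p2 - q2)).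
  assert (E1 : (p1 - q1)² = 0) by (rewrite Rsqr_pow2; lra).
  assert (E2 : (p2 - q2)² = 0) by (rewrite Rsqr_pow2; lra).
  apply Rsqr_0_uniq in E1, E2. f_equal; lra.
Qed.

Definition ray (u : point) (t phi : R) : point := (fst u + t * cos phi, snd u + t * sin phi).

Lemma dist_ray u t phi : 0 <= t -> dist u (ray u t phi) = t.
Proof.
  intros Ht. unfold dist, ray; cbn [fst snd].
  replace ((fst u - (fst u + t * cos phi)) ^ 2 + (snd u - (snd u + t * sin phi)) ^ 2)
    with (t * t * ((sin phi)² + (cos phi)²)) by (unfold Rsqr; ring).
  rewrite sin2_cos2, Rmult_1_r. apply sqrt_square, Ht.
Qed.

Lemma exists_polar_ray u y : exists th, y = ray u (dist u y) th.
Proof.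
  destruct (classic (y = u)) as [->|Hyu].
  { exists 0. replace (dist u u) with 0 by (unfold dist; rewrite <- sqrt_0; f_equal; ring).
    destruct u; unfold ray; cbn [fst snd]; f_equal; ring. }
  set (d := dist u y). assert (Hd : 0 < d) by (apply dist_pos, not_eq_sym, Hyu).
  pose proof (dist_sqr u y) as Hsq; fold d in Hsq.
  destruct (unit_circle_angle ((fst y - fst u) / d) ((snd y - snd u) / d)) as [th [Hc Hs]].
  { replace ((fst y - fst u) / d * ((fst y - fst u) / d) + (snd y - snd u) / d * ((snd y - snd u) / d))
      with (((fst u - fst y) ^ 2 + (snd u - snd y) ^ 2) / (d * d)) by (field; lra).
    rewrite <- Hsq. field; lra. }
  exists th. destruct y as [y1 y2]. unfold ray. rewrite Hc, Hs. cbn [fst snd].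
  f_equal; field; lra.
Qed.

Lemma dist_ray_ray_lt u t d phi th :
  0 < t < d -> 1 / 2 <= cos (phi - th) -> dist (ray u t phi) (ray u d th) < d.
Proof.
  intros Htd Hcos. rewrite cos_minus in Hcos.
  assert (Hsq : dist (ray u t phi) (ray u d th) * dist (ray u t phi) (ray u d th) < d * d).
  { rewrite dist_sqr. unfold ray; cbn [fst snd].
    pose proof (sin2_cos2 phi) as E1. pose proof (sin2_cos2 th) as E2. unfold Rsqr in E1, E2.
    replace ((fst u + t * cos phi - (fst u + d * cos th)) ^ 2 +
             (snd u + t * sin phi - (snd u + d * sin th)) ^ 2)
      with (t * t * (sin phi * sin phi + cos phi * cos phi)
            + d * d * (sin th * sin th + cos th * cos th)
            - 2 * t * d * (cos phi * cos th + sin phi * sin th)) by ring.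
    rewrite E1, E2.
    (* law of cosines, with cos (phi - th) >= 1/2 *)
    assert (t * d * (1 / 2) <= t * d * (cos phi * cos th + sin phi * sin th))
      by (apply Rmult_le_compat_l; nra).
    assert (0 < t * (d - t)) by (apply Rmult_lt_0_compat; lra).
    nra. }
  pose proof (dist_nonneg (ray u t phi) (ray u d th)). nra.
Qed.

Section CBTC.

Variables (V : list point) (Rad : R) (k : nat) (r : nat -> R) (alpha : R).
Hypothesis Hlevels : radius_levels k r Rad.

Lemma radius_le_Rad i : (1 <= i <= k)%nat -> r i <= Rad.
Proof.
  destruct Hlevels as [_ [_ [Hincr Hrk]]]. rewrite <- Hrk.
  intros [Hi1 Hik].
  assert (Hmono : forall m, (i <= m)%nat -> (m <= k)%nat -> r i <= r m).
  { intros m Him. induction Him as [|m Him IH]; intros Hmk; [lra|].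
    pose proof (Hincr m ltac:(lia) ltac:(lia)). specialize (IH ltac:(lia)). lra. }
  apply Hmono; lia.
Qed.

Lemma is_iu_exists u : exists i, is_iu V k r alpha u i.
Proof.
  destruct Hlevels as [Hk _].
  set (P := fun i => (1 <= i <= k)%nat /\ ~ has_gap u alpha (Sset V r i u)).
  destruct (classic (exists i, P i)) as [HP|HnoP].
  - destruct (dec_inh_nat_subset_has_unique_least_element P (fun n => classic (P n)) HP)
      as [i [[[Hi Hgap] Hleast] _]].
    exists i. split; [exact Hi|]. left. split; [exact Hgap|].
    intros j Hj Hji. apply NNPP. intros Hnogap.
    assert (Hjk : (j <= k)%nat) by lia.
    specialize (Hleast j (conj (conj Hj Hjk) Hnogap)). lia.
  - exists k. split; [lia|]. right. split; [reflexivity|].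
    intros j Hj. apply NNPP. intros Hnogap. apply HnoP. exists j. split; assumption.
Qed.

Lemma Eminus_ER u v : Eminus V k r alpha u v -> ER V Rad u v.
Proof.
  intros [Hu [Hv [[i [[Hi _] [_ [Hvu Hdist]]]] _]]].
  repeat split; try assumption.
  - intros ->. apply Hvu; reflexivity.
  - pose proof (radius_le_Rad i Hi). lra.
Qed.

Hypothesis Halpha : alpha <= 2 * PI / 3.

Lemma not_Nalpha_shortcut u v :
  In v V -> u <> v -> dist u v <= Rad -> ~ Nalpha V k r alpha u v ->
  exists w, In w V /\ dist u w < dist u v /\ dist w v < dist u v.
Proof.
  intros Hv Huv Hd HnotN.
  destruct (is_iu_exists u) as [i Hi].
  assert (Hri : r i < dist u v).
  { apply Rnot_le_lt. intros Hle. apply HnotN. exists i. split; [exact Hi|].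
    repeat split; auto. }
  destruct Hi as [_ [[Hnogap _] | [-> _]]].
  2: { destruct Hlevels as [_ [_ [_ Hrk]]]. lra. }
  destruct (exists_polar_ray u v) as [th Hvray].
  assert (Hw : exists w, Sset V r i u w /\ in_cone u alpha th w).
  { apply NNPP. intros Hnow. apply Hnogap. exists th. intros w Sw Cw. eauto. }
  destruct Hw as [w [[Hw [Hwu Hdw]] [t [phi [Ht [Hphi ->]]]]]].
  fold (ray u t phi) in *.
  rewrite (dist_ray u t phi Ht) in Hdw.
  assert (Htpos : 0 < t).
  { rewrite <- (dist_ray u t phi Ht). apply dist_pos, not_eq_sym, Hwu. }
  exists (ray u t phi). rewrite (dist_ray u t phi Ht). split; [exact Hw|]. split; [lra|].
  set (d := dist u v) in *. rewrite Hvray. apply dist_ray_ray_lt; [lra|].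
  apply cos_ge_half. pose proof PI_RGT_0. lra.
Qed.

Lemma ER_shortcut u v :
  ER V Rad u v -> ~ Eminus V k r alpha u v ->
  exists w, ER V Rad u w /\ ER V Rad w v /\ dist u w < dist u v /\ dist w v < dist u v.
Proof.
  intros [Hu [Hv [Huv Hd]]] HnotE.
  assert (Hshort : exists w, In w V /\ dist u w < dist u v /\ dist w v < dist u v).
  { destruct (classic (Nalpha V k r alpha u v)) as [Huv_N | Huv_N].
    - assert (Hvu_N : ~ Nalpha V k r alpha v u) by (intros Hvu_N; apply HnotE; repeat split; assumption).
      rewrite dist_sym in Hd.
      destruct (not_Nalpha_shortcut v u Hu (not_eq_sym Huv) Hd Hvu_N) as [w [Hw [Hvw Hwu]]].
      exists w. rewrite (dist_sym u w), (dist_sym w v), (dist_sym u v). auto.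
    - exact (not_Nalpha_shortcut u v Hv Huv Hd Huv_N). }
  destruct Hshort as [w [Hw [Huw Hwv]]].
  exists w. repeat split; try assumption; try lra.
  - intros <-. rewrite dist_sym in Hwv. lra.
  - intros ->. lra.
Qed.

Definition shorter_pairs (e : R) : nat :=
  length (filter (fun p => if Rlt_dec (dist (fst p) (snd p)) e then true else false)
                 (list_prod V V)).

Lemma shorter_pairs_lt a b e :
  In a V -> In b V -> dist a b < e -> (shorter_pairs (dist a b) < shorter_pairs e)%nat.
Proof.
  intros Ha Hb Hab. apply (filter_length_incl_lt _ _ _ (a, b)).
  - intros p. cbn beta. do 2 destruct Rlt_dec; auto; lra.
  - apply in_prod; assumption.
  - cbn [fst snd]. destruct Rlt_dec; [lra | reflexivity].
  - cbn [fst snd]. destruct Rlt_dec; [reflexivity | lra].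
Qed.

Lemma ER_connected_Eminus u v : ER V Rad u v -> connected (Eminus V k r alpha) u v.
Proof.
  remember (shorter_pairs (dist u v)) as n eqn:Hn. revert u v Hn.
  induction n as [n IH] using lt_wf_ind. intros u v Hn Huv.
  destruct (classic (Eminus V k r alpha u v)) as [HE | HnotE]; [apply rt_step, HE|].
  destruct (ER_shortcut u v Huv HnotE) as [w [Huw [Hwv [Hduw Hdwv]]]].
  destruct Huv as [Hu [Hv _]]. pose proof (proj1 Hwv) as Hw.
  apply rt_trans with w.
  - apply (IH (shorter_pairs (dist u w))); [subst n; apply shorter_pairs_lt | |]; auto.
  - apply (IH (shorter_pairs (dist w v))); [subst n; apply shorter_pairs_lt | |]; auto.
Qed.

End CBTC.

Theorem theorem4 (V : list point) (Rad : R) (k : nat) (r : nat -> R) (alpha : R) :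
  NoDup V ->
  0 < Rad ->
  radius_levels k r Rad ->
  0 < alpha -> alpha <= 2 * PI / 3 ->
  forall u v, In u V -> In v V ->
    (connected (Eminus V k r alpha) u v <-> connected (ER V Rad) u v).
Proof.
  intros _ _ Hlevels _ Halpha u v _ _. unfold connected. split.
  - exact (clos_rt_incl _ _ (Eminus_ER V Rad k r alpha Hlevels) u v).
  - intros HER. apply clos_rt_idempotent.
    exact (clos_rt_incl _ _ (ER_connected_Eminus V Rad k r alpha Hlevels Halpha) u v HER).
Qed.
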